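(* Let $\mathfrak g$ be a nonsemisimple complex Lie algebra, $\mathfrak p$ a solvable nonperfect ideal of $\mathfrak g$, and $V$ an irreducible $\mathfrak g$-module. Then the following are equivalent: (1) $V$ is a locally finite $\mathfrak p$-module (every $v\in V$ lies in a finite-dimensional $\mathfrak p$-submodule); (2) $V$ is a quasi-Whittaker module for $\mathfrak g$, i.e., there exist a Lie algebra homomorphism $\phi:\mathfrak p\to\mathbb C$ and a vector $v\in V$ with $pv=\phi(p)v$ for all $p\in\mathfrak p$ that generates $V$ as a $\mathfrak g$-module.
   Context: A Lie algebra homomorphism $\phi:\mathfrak p\to\mathbb C$ is a linear map vanishing on $[\mathfrak p,\mathfrak p]$. A vector $v$ with $pv=\phi(p)v$ for all $p\in\mathfrak p$ is called a quasi-Whittaker vector of type $\phi$, and a module generated by such a vector a quasi-Whittaker module of type $\phi$. *)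

From HB Require Import structures.
From mathcomp Require Import all_boot all_order all_algebra.
From mathcomp Require Import complex Rstruct.
Set Implicit Arguments. Unset Strict Implicit. Unset Printing Implicit Defensive.
Import Order.TTheory GRing.Theory Num.Theory.
Local Open Scope ring_scope.

Definition CC : fieldType := (Rdefinitions.R)[i].

Section Lie.
Variable g : vectType CC.
Variable br : g -> g -> g.

Definition is_lie_bracket : Prop :=
  [/\ (forall (a : CC) x y z, br (a *: x + y) z = a *: br x z + br y z),
      (forall (a : CC) x y z, br z (a *: x + y) = a *: br z x + br z y),
      (forall x, br x x = 0) &
      (forall x y z, br x (br y z) + br y (br z x) + br z (br x y) = 0)].

(* [U, U]: the subspace spanned by all brackets of elements of U
   (equivalently, of basis elements of U, by bilinearity). *)
Definition derived (U : {vspace g}) : {vspace g} :=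
  <<[seq br x y | x <- vbasis U, y <- vbasis U]>>%VS.

Definition lie_subalgebra (U : {vspace g}) : Prop :=
  forall x y, x \in U -> y \in U -> br x y \in U.

Definition lie_ideal (U : {vspace g}) : Prop :=
  forall x y, y \in U -> br x y \in U.

Definition lie_solvable (U : {vspace g}) : Prop :=
  exists n, iter n derived U = 0%VS.

Definition lie_perfect (U : {vspace g}) : Prop := derived U = U.

Definition lie_semisimple : Prop :=
  forall U : {vspace g}, lie_ideal U -> lie_solvable U -> U = 0%VS.

Definition lie_hom_to_C (p : {vspace g}) (phi : g -> CC) : Prop :=
  (forall (a : CC) x y, x \in p -> y \in p -> phi (a *: x + y) = a * phi x + phi y)
  /\ (forall x, x \in derived p -> phi x = 0).

Variable V : lmodType CC.
Variable act : g -> V -> V.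

Definition is_lie_module : Prop :=
  [/\ (forall (a : CC) x y v, act (a *: x + y) v = a *: act x v + act y v),
      (forall (a : CC) x v w, act x (a *: v + w) = a *: act x v + act x w) &
      (forall x y v, act (br x y) v = act x (act y v) - act y (act x v))].

Definition submodule (S : V -> Prop) : Prop :=
  [/\ S 0,
      (forall (a : CC) v w, S v -> S w -> S (a *: v + w)) &
      (forall x v, S v -> S (act x v))].

Definition irreducible_module : Prop :=
  (exists v : V, v != 0) /\
  forall S, submodule S -> (forall v, S v -> v = 0) \/ (forall v, S v).

Definition in_span (s : seq V) (w : V) : Prop :=
  exists c : 'I_(size s) -> CC, w = \sum_(i < size s) c i *: s`_i.

(* V is a locally finite p-module: each v lies in a finite-dimensional
   p-submodule (the span of some finite family, stable under p). *)
Definition locally_finite (p : {vspace g}) : Prop :=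
  forall v : V, exists s : seq V,
    in_span s v /\ (forall x w, x \in p -> in_span s w -> in_span s (act x w)).

Definition generates (v : V) : Prop :=
  forall S, submodule S -> S v -> forall w, S w.

Definition quasi_whittaker (p : {vspace g}) : Prop :=
  exists phi : g -> CC, lie_hom_to_C p phi /\
  exists v : V, (forall x, x \in p -> act x v = phi x *: v) /\ generates v.

End Lie.

(* A quasi-Whittaker vector [v] of type [phi] lies in the subspaces [L_n]
   spanned by the words [y_1 (... (y_k v))], [k <= n], [y_i] in a basis of [g].
   Each [L_n] is finite-dimensional and [p]-stable, since [x] in the ideal [p]
   moves past [y] at the cost of [[y, x]], again in [p]; their union is a
   submodule containing [v], hence all of [V].
   Conversely, a nonzero finite-dimensional [p]-stable subspace of [V] carries
   a matrix representation of the solvable [p], which by Lie's theorem has a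
   common eigenvector [v]; its eigenvalues form a character [phi] of [p] (the
   commutators of [p] act on [v] by commutators of scalars), and [v] generates
   [V] by irreducibility. *)

From HB Require Import structures.
From mathcomp Require Import all_boot all_order all_algebra.
From mathcomp Require Import complex Rstruct.
From Stdlib Require Import Classical.
Set Implicit Arguments. Unset Strict Implicit. Unset Printing Implicit Defensive.
Import Order.TTheory GRing.Theory Num.Theory.
Local Open Scope ring_scope.

Section LinearMaps.
Variables (R : pzRingType) (U V : lmodType R) (f : U -> V).
Hypothesis f_linear : linear f.

Let fL : {linear U -> V} := HB.pack f (GRing.isLinear.Build R U V *:%R f f_linear).

Lemma lin0 : f 0 = 0. Proof. exact: linear0 fL. Qed.

Lemma linZ a u : f (a *: u) = a *: f u.
Proof. by rewrite -[f]/(fL : U -> V) linearZ. Qed.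

Lemma linB u u' : f (u - u') = f u - f u'.
Proof. by rewrite -[f]/(fL : U -> V) linearB. Qed.

Lemma lin_sum m (a : 'I_m -> R) (u : 'I_m -> U) :
  f (\sum_(i < m) a i *: u i) = \sum_(i < m) a i *: f (u i).
Proof.
by rewrite -[f]/(fL : U -> V) linear_sum; apply: eq_bigr => i _; rewrite linearZ.
Qed.

End LinearMaps.

Lemma scalerIv (K : fieldType) (V : lmodType K) (v : V) :
  v != 0 -> injective ( *:%R^~ v).
Proof.
move=> v0 a b /eqP; rewrite -subr_eq0 -scalerBl scaler_eq0 (negbTE v0) orbF.
by rewrite subr_eq0 => /eqP.
Qed.

Lemma vbasis_nth_mem (K : fieldType) (vT : vectType K) (U : {vspace vT})
    (i : 'I_(\dim U)) :
  (vbasis U)`_i \in U.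
Proof. by apply: vbasis_mem; apply: mem_nth; rewrite size_tuple. Qed.

Lemma hyperplane_between (K : fieldType) (vT : vectType K) (D U : {vspace vT}) x :
  (D <= U)%VS -> x \in U -> x \notin D ->
  exists H : {vspace vT}, [/\ (D <= H <= U)%VS, x \notin H & (U <= H + <[x]>)%VS].
Proof.
move=> DU xU xD; set E := (D + <[x]>)%VS.
exists (D + (U :\: E))%VS; split.
- by rewrite addvSl subv_add DU diffvSl.
- apply/memv_addP => -[d dD [e eUE xde]].
  have eE : e \in E.
    rewrite -[e](addKr d) -xde addrC memvB //.
      exact: subvP (addvSr _ _) _ (memv_line x).
    exact: subvP (addvSl _ _) _ dD.
  have : e \in ((U :\: E) :&: E)%VS by rewrite memv_cap eUE.
  by rewrite capv_diff memv0 => /eqP e0; rewrite xde e0 addr0 dD in xD.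
- by rewrite -addvA [(_ + <[x]>)%VS]addvC addvA -/E addvC addv_diff addvSl.
Qed.

Section LieAlgebra.
Variables (g : vectType CC) (br : g -> g -> g).
Hypothesis Hbr : is_lie_bracket br.

Lemma br_linear_l z : linear (br^~ z).
Proof. by case: Hbr => H _ _ _ a x y; apply: H. Qed.

Lemma br_linear_r z : linear (br z).
Proof. by case: Hbr => _ H _ _ a x y; apply: H. Qed.

Lemma br_derived (U : {vspace g}) x y : x \in U -> y \in U -> br x y \in derived br U.
Proof.
move=> xU yU; rewrite (coord_vbasis xU) (coord_vbasis yU) (lin_sum (br_linear_l _)).
apply: memv_suml => i _; apply: memvZ; rewrite (lin_sum (br_linear_r _)).
apply: memv_suml => j _; apply/memvZ/memv_span.
by apply: allpairs_f; apply: mem_nth; rewrite size_tuple.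
Qed.

Lemma derived_sub (U : {vspace g}) : lie_subalgebra br U -> (derived br U <= U)%VS.
Proof.
move=> sU; apply/span_subvP => _ /allpairsP [[x y] [/= /vbasis_mem xU /vbasis_mem yU ->]].
exact: sU.
Qed.

Lemma derivedS (U U' : {vspace g}) : (U <= U')%VS -> (derived br U <= derived br U')%VS.
Proof.
move=> UU'; apply/span_subvP => _ /allpairsP [[x y] [/= /vbasis_mem xU /vbasis_mem yU ->]].
by apply: br_derived; apply: (subvP UU').
Qed.

Lemma solvableS (U U' : {vspace g}) :
  (U <= U')%VS -> lie_solvable br U' -> lie_solvable br U.
Proof.
move=> UU' [k Uk0]; exists k; apply/eqP; rewrite -subv0 -Uk0.
by elim: k {Uk0} => //= k IHk; apply: derivedS.
Qed.

Lemma lie_ideal_subalgebra (U : {vspace g}) : lie_ideal br U -> lie_subalgebra br U.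
Proof. by move=> iU x y _; apply: iU. Qed.

Lemma solvable_derived_proper (U : {vspace g}) :
  lie_subalgebra br U -> lie_solvable br U -> U != 0%VS ->
  exists2 x, x \in U & x \notin derived br U.
Proof.
move=> sU [k Uk0] U0; apply/subvPn; apply: contra U0 => UD.
have DU : derived br U = U by apply/eqP; rewrite eqEsubv derived_sub.
suff <- : iter k (derived br) U = U by rewrite Uk0.
by elim: k {Uk0} => //= k ->.
Qed.

End LieAlgebra.

Lemma eigenvector_in_stable (C : numClosedFieldType) m n (W : 'M[C]_(m, n)) X :
  W != 0 -> stablemx W X ->
  exists2 w : 'rV_n, w != 0 & (w <= W)%MS /\ exists a, w *m X = a *: w.
Proof.
move=> W0 WX; have rW : (0 < \rank W)%N by rewrite lt0n mxrank_eq0.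
have [a] := eigenvalue_closed (restrictmx W X) rW.
case/eigenvalueP => v vX v0; exists (v *m row_base W).
  by rewrite mulmx_free_eq0 ?row_base_free.
split; first by rewrite -(eq_row_base W) submxMl.
have BX : row_base W *m X = restrictmx W X *m row_base W.
  by rewrite mulmxKpV ?stablemx_row_base.
by exists a; rewrite -mulmxA BX mulmxA vX scalemxAl.
Qed.

Lemma mulmx_eigenX (R : comNzRingType) n (A : 'M[R]_n) (v : 'rV_n) a k :
  v *m A = a *: v -> v *m A ^+ k = a ^+ k *: v.
Proof.
move=> vA; elim: k => [|k IHk]; first by rewrite expr0 mulmx1 scale1r.
by rewrite exprSr -mulmxE mulmxA IHk -scalemxAl vA scalerA -exprSr.
Qed.

Lemma mxtrace_nilpotent (F : closedFieldType) n (N : 'M[F]_n) k :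
  N ^+ k = 0 -> \tr N = 0.
Proof.
move=> Nk0; case: n N Nk0 => [|n] N Nk0; first by rewrite /mxtrace big_ord0.
have [rs Ers] := closed_field_poly_normal (char_poly N).
rewrite (monicP (char_poly_monic N)) scale1r in Ers.
have size_rs : size rs = n.+1.
  by have := size_char_poly N; rewrite Ers size_prod_XsubC => -[].
have rs0 z : z \in rs -> z = 0.
  move=> zrs; have /eigenvalueP [v vN v0] : eigenvalue N z.
    by rewrite eigenvalue_root_char Ers root_prod_XsubC.
  move/(mulmx_eigenX k): vN; rewrite Nk0 mulmx0 => /esym/eqP.
  by rewrite scaler_eq0 (negbTE v0) orbF expf_eq0 => /andP [_ /eqP].
apply/eqP; rewrite -oppr_eq0 -(char_poly_trace N) // Ers.
rewrite -[in X in _`_X]size_rs coefPn_prod_XsubC ?size_rs // oppr_eq0.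
by rewrite big_seq big1 // => z /rs0.
Qed.

Lemma nilpotent_commutator_shift (C : numClosedFieldType) m (X Y : 'M[C]_m) c k :
  (0 < m)%N -> (X *m Y - Y *m X - c%:M) ^+ k = 0 -> c = 0.
Proof.
move=> m0 /mxtrace_nilpotent; rewrite !raddfB /= mxtrace_mulC subrr sub0r.
by rewrite mxtrace_scalar => /eqP; rewrite oppr_eq0 mulrn_eq0 eqn0Ngt m0 => /eqP.
Qed.

Lemma conjmxB (F : fieldType) m n (V : 'M[F]_(m, n)) f f' :
  conjmx V (f - f') = conjmx V f - conjmx V f'.
Proof. by rewrite /conjmx mulmxBr mulmxBl. Qed.

Lemma stable_commutator_shift (C : numClosedFieldType) m n (U : 'M[C]_(m, n)) X Y c k :
  U != 0 -> stablemx U X -> stablemx U Y ->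
  U *m (X *m Y - Y *m X - c%:M) ^+ k = 0 -> c = 0.
Proof.
move=> U0 UX UY; set N := _ - c%:M => UN0.
have [UX' UY'] : stablemx (row_base U) X /\ stablemx (row_base U) Y.
  by rewrite !stablemx_row_base; split.
have UN : stablemx (row_base U) N.
  by rewrite /N !stablemxD ?stablemxN ?stablemxC ?stablemxM.
have rN : restrictmx U N = restrictmx U X *m restrictmx U Y
                          - restrictmx U Y *m restrictmx U X - c%:M.
  by rewrite !conjmxB -!conjmxM ?inE // conjmx_scalar ?row_base_free.
have restrictX j : restrictmx U N ^+ j *m row_base U = row_base U *m N ^+ j.
  elim: j => [|j IHj]; first by rewrite !expr0 mul1mx mulmx1.
  by rewrite !exprSr -!mulmxE -mulmxA mulmxKpV // mulmxA IHj mulmxA.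
have rU : (0 < \rank U)%N by rewrite lt0n mxrank_eq0.
apply: (nilpotent_commutator_shift (X := restrictmx U X) (Y := restrictmx U Y) (k := k))
  => //.
rewrite -rN.
apply: (row_free_inj (row_base_free U)); rewrite restrictX mul0mx.
have /submxP [D ->] : (row_base U <= U)%MS by rewrite eq_row_base.
by rewrite -mulmxA UN0 mulmx0.
Qed.

(* Dynkin's invariance lemma.  [S i] is spanned by [w, w X, ..., w X^(i-1)],
   [X = rho x]; each [rho y - lam y] maps [S i.+1] into [S i], and once the
   Krylov flag stops growing, [S d] is stable under [rho x] and [rho h], so the
   trace of [rho (br y x) - lam (br y x)], a shifted commutator that is
   nilpotent on [S d], forces [lam (br y x) = 0]. *)
Section Invariance.
Variables (g : vectType CC) (br : g -> g -> g) (n : nat) (rho : g -> 'M[CC]_n).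
Variables (h : {vspace g}) (x : g) (lam : g -> CC) (w : 'rV[CC]_n).
Hypothesis br_x : forall y, y \in h -> br y x \in h.
Hypothesis rho_br_x : forall y, y \in h -> rho (br y x) = rho x *m rho y - rho y *m rho x.
Hypothesis w_neq0 : w != 0.
Hypothesis w_weight : forall y, y \in h -> w *m rho y = lam y *: w.

Let u i := iter i (mulmxr (rho x)) w.
Let S i := (\sum_(j < i) <<u j>>)%MS.

Let S0 : S 0 = 0. Proof. by rewrite /S big_ord0. Qed.

Let S_rec i : S i.+1 = (S i + <<u i>>)%MS. Proof. by rewrite /S big_ord_recr. Qed.

Let u_S i : (u i <= S i.+1)%MS.
Proof. by rewrite S_rec (submx_trans _ (addsmxSr _ _)) ?genmxE. Qed.

Let S_mono i j : (i <= j)%N -> (S i <= S j)%MS.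
Proof.
move=> /subnK <-; elim: (j - i)%N => // k IHk.
by rewrite (submx_trans IHk) // addSn S_rec addsmxSl.
Qed.

Let S_x i : (S i *m rho x <= S i.+1)%MS.
Proof.
elim: i => [|i IHi]; first by rewrite S0 mul0mx sub0mx.
rewrite S_rec addsmxMr addsmx_sub (submx_trans IHi) ?S_mono //=.
by rewrite (eqmxMr _ (genmxE _)); apply: (u_S i.+1).
Qed.

Let u_weight_mod i y : y \in h -> (u i *m rho y - lam y *: u i <= S i)%MS.
Proof.
elim: i y => [|i IHi] y yh; first by rewrite /= w_weight // subrr sub0mx.
have -> : u i.+1 *m rho y - lam y *: u i.+1 =
    (u i *m rho (br y x) - lam (br y x) *: u i) + lam (br y x) *: u i
    + (u i *m rho y - lam y *: u i) *m rho x.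
  by rewrite /= rho_br_x // subrK mulmxBr mulmxBl !mulmxA -scalemxAl addrA subrK.
apply: addmx_sub; first apply: addmx_sub.
- exact: submx_trans (IHi _ (br_x yh)) (S_mono (leqnSn i)).
- by rewrite scalemx_sub ?u_S.
- exact: submx_trans (submxMr _ (IHi _ yh)) (S_x _).
Qed.

Let S_shift i y : y \in h -> (S i.+1 *m (rho y - (lam y)%:M) <= S i)%MS.
Proof.
move=> yh; rewrite /S sumsmxMr; apply/sumsmx_subP => j _.
rewrite (eqmxMr _ (genmxE _)) mulmxBr mul_mx_scalar.
exact: submx_trans (u_weight_mod j yh) (S_mono (ltn_ord j : (j <= i)%N)).
Qed.

Let S_h i y : y \in h -> stablemx (S i) (rho y).
Proof.
case: i => [|i] yh; first by rewrite S0 mul0mx sub0mx.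
rewrite -[rho y](subrK (lam y)%:M) mulmxDr addmx_sub //.
  exact: submx_trans (S_shift i yh) (S_mono (leqnSn i)).
by rewrite mul_mx_scalar scalemx_sub.
Qed.

Let S_nilpotent i y : y \in h -> S i *m (rho y - (lam y)%:M) ^+ i = 0.
Proof.
move=> yh; apply/eqP; rewrite -submx0 -S0.
elim: i => [|i IHi]; first by rewrite expr0 mulmx1.
by rewrite exprS -mulmxE mulmxA (submx_trans (submxMr _ (S_shift i yh))).
Qed.

Let krylov_stops : exists d, (u d <= S d)%MS.
Proof.
suff [d ud] : exists d : 'I_n.+1, (u d <= S d)%MS by exists d.
apply/existsP; apply: contraT => /existsPn unew.
suff /(_ n.+1 (leqnn _)) : forall i, (i <= n.+1)%N -> (i <= \rank (S i))%N.
  by rewrite ltnNge rank_leq_col.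
elim=> // i IHi ilt; apply: leq_ltn_trans (IHi (ltnW ilt)) _.
have [le_rk eq_rk] := mxrank_leqif_sup (S_mono (leqnSn i)).
rewrite ltn_neqAle le_rk andbT eq_rk S_rec addsmx_sub submx_refl genmxE.
exact: unew (Ordinal ilt).
Qed.

Lemma weight_br_eq0 y : y \in h -> lam (br y x) = 0.
Proof.
move=> yh; have [d ud] := krylov_stops.
have d_gt0 : (0 < d)%N.
  case: d ud => //; rewrite S0 submx0 => /eqP w0.
  by move: w_neq0; rewrite -[w]/(u 0) w0 eqxx.
have Sd_x : stablemx (S d) (rho x).
  by rewrite (submx_trans (S_x d)) // S_rec addsmx_sub submx_refl genmxE.
have Sd_neq0 : S d != 0.
  apply: contraNneq w_neq0 => Sd0; rewrite -submx0 -Sd0.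
  exact: submx_trans (u_S 0) (S_mono d_gt0).
apply: (stable_commutator_shift (k := d) Sd_neq0 Sd_x (S_h d yh)).
by rewrite -rho_br_x // S_nilpotent ?br_x.
Qed.

End Invariance.

(* Row vectors carry a right action: [v *m rho x] stands for [x . v], so
   [rho] reverses brackets. *)
Section LieTheorem.
Variables (g : vectType CC) (br : g -> g -> g) (n : nat) (rho : g -> 'M[CC]_n).
Variable p : {vspace g}.
Hypothesis Hbr : is_lie_bracket br.
Hypothesis rho_linear : forall (a : CC) x y, x \in p -> y \in p ->
  rho (a *: x + y) = a *: rho x + rho y.
Hypothesis rho_br : forall x y, x \in p -> y \in p ->
  rho (br x y) = rho y *m rho x - rho x *m rho y.

Let rho0 : rho 0 = 0.
Proof.
have := rho_linear 1 (mem0v p) (mem0v p); rewrite scale1r !addr0 scale1r.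
by move/(congr1 (fun M => M - rho 0)); rewrite subrr addrK.
Qed.

Lemma rho_sum m (a : 'I_m -> CC) (u : 'I_m -> g) : (forall i, u i \in p) ->
  rho (\sum_(i < m) a i *: u i) = \sum_(i < m) a i *: rho (u i).
Proof.
elim: m a u => [|m IHm] a u up; first by rewrite !big_ord0 rho0.
by rewrite !big_ord_recl rho_linear ?IHm ?memv_suml // => i _; rewrite memvZ.
Qed.

Section WeightSpace.
Variables (h : {vspace g}) (lb : 'I_(\dim h) -> CC).
Hypothesis hp : (h <= p)%VS.

Definition weight_of y := \sum_i coord (vbasis h) i y * lb i.

Definition weight_space m (W : 'M_(m, n)) :=
  (W :&: \bigcap_(i < \dim h) kermx (rho (vbasis h)`_i - (lb i)%:M))%MS.

Lemma weight_spaceP m (W : 'M_(m, n)) (v : 'rV_n) :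
  reflect ((v <= W)%MS /\ forall i : 'I_(\dim h), v *m rho (vbasis h)`_i = lb i *: v)
          (v <= weight_space W)%MS.
Proof.
rewrite sub_capmx; apply: (iffP andP) => -[vW vh]; split => //.
  move=> i; move/sub_bigcapmxP/(_ i isT): vh.
  by rewrite sub_kermx mulmxBr mul_mx_scalar subr_eq0 => /eqP.
by apply/sub_bigcapmxP => i _; rewrite sub_kermx mulmxBr mul_mx_scalar vh subrr.
Qed.

Lemma weight_space_eigen m (W : 'M_(m, n)) (v : 'rV_n) y :
  (v <= weight_space W)%MS -> y \in h -> v *m rho y = weight_of y *: v.
Proof.
move=> /weight_spaceP [_ vh] yh.
rewrite {1}(coord_vbasis yh) rho_sum => [|i]; last exact: subvP hp _ (vbasis_nth_mem i).
rewrite mulmx_sumr /weight_of scaler_suml; apply: eq_bigr => i _.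
by rewrite -scalemxAr vh scalerA.
Qed.

Lemma weight_space_stable m (W : 'M_(m, n)) x :
  x \in p -> (forall y, y \in h -> br y x \in h) -> stablemx W (rho x) ->
  stablemx (weight_space W) (rho x).
Proof.
move=> xp hx Wx; apply/row_subP => r; rewrite row_mul.
set v := row r _; have vWl : (v <= weight_space W)%MS by apply: row_sub.
have [-> | v0] := eqVneq v 0; first by rewrite mul0mx sub0mx.
have /weight_spaceP [vW vh] := vWl; apply/weight_spaceP; split.
  exact: submx_trans (submxMr _ vW) Wx.
move=> i; have bh := vbasis_nth_mem i; have bp := subvP hp _ bh.
have : v *m rho (br (vbasis h)`_i x) = 0.
  rewrite (weight_space_eigen vWl) ?hx //.
  have rho_br_x y : y \in h -> rho (br y x) = rho x *m rho y - rho y *m rho x.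
    by move=> yh; apply: rho_br => //; apply: (subvP hp).
  have v_weight y : y \in h -> v *m rho y = weight_of y *: v.
    exact: weight_space_eigen vWl.
  by rewrite (weight_br_eq0 hx rho_br_x v0 v_weight) ?scale0r.
by rewrite rho_br // mulmxBr !mulmxA vh -scalemxAl => /eqP; rewrite subr_eq0 => /eqP.
Qed.

End WeightSpace.

Arguments weight_of h lb y : clear implicits.
Arguments weight_space h lb {m} W.

(* Induction on [\dim k]: a hyperplane [h] of [k] containing [[k, k]] is an
   ideal of [k], so by the invariance lemma its weight space in [W] is stable
   under the remaining direction [x0], where an eigenvector of [rho x0] can be
   taken. *)
Theorem solvable_common_eigenvector (k : {vspace g}) m (W : 'M_(m, n)) :
  (k <= p)%VS -> lie_subalgebra br k -> lie_solvable br k -> W != 0 ->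
  (forall x, x \in k -> stablemx W (rho x)) ->
  exists2 w : 'rV_n, w != 0 &
    (w <= W)%MS /\ forall x, x \in k -> exists c, w *m rho x = c *: w.
Proof.
have [d] := ubnP (\dim k); elim: d k m W => // d IHd k m W.
rewrite ltnS => dimk kp ksub ksolv W0 Wk.
have [-> | k0] := eqVneq k 0%VS.
  have /rowV0Pn [v vW v0] := W0; exists v => //; split => // x.
  by rewrite memv0 => /eqP ->; exists 0; rewrite rho0 mulmx0 scale0r.
have [x0 x0k x0D] := solvable_derived_proper ksub ksolv k0.
have [h [/andP [Dh hk] x0h khx]] := hyperplane_between (derived_sub ksub) x0k x0D.
have hp := subv_trans hk kp.
have br_h y z : y \in k -> z \in k -> br y z \in h.
  by move=> yk zk; apply: (subvP Dh); apply: br_derived.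
have dimh : (\dim h < d)%N.
  apply: leq_trans dimk; rewrite ltn_neqAle dimvS // andbT.
  by apply: contraNneq x0h => /eqP; rewrite (dimv_leqif_eq hk) => /eqP ->.
have [w0 w0_neq0 [w0W w0h]] := IHd h m W dimh hp
  (fun y z yh zh => br_h y z (subvP hk y yh) (subvP hk z zh))
  (solvableS Hbr hk ksolv) W0 (fun y yh => Wk y (subvP hk y yh)).
have [lb w0lb] := fin_all_exists (fun i => w0h _ (vbasis_nth_mem i)).
have w0Wl : (w0 <= weight_space h lb W)%MS by apply/weight_spaceP.
have Wl0 : weight_space h lb W != 0.
  by apply: contraNneq w0_neq0 => Wl0; rewrite -submx0 -Wl0.
have Wlx0 : stablemx (weight_space h lb W) (rho x0).
  apply: (weight_space_stable lb hp (subvP kp _ x0k)) (Wk x0 x0k) => y yh.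
  exact: br_h (subvP hk y yh) x0k.
have [w1 w1_neq0 [w1Wl [mu w1x0]]] := eigenvector_in_stable Wl0 Wlx0.
exists w1 => //; split; first by rewrite (submx_trans w1Wl) ?capmxSl.
move=> y /(subvP khx) /memv_addP [y1 y1h [_ /vlineP [a ->] ->]].
exists (a * mu + weight_of h lb y1).
rewrite addrC rho_linear ?(subvP kp _ x0k) ?(subvP hp _ y1h) //.
by rewrite mulmxDr -scalemxAr w1x0 (weight_space_eigen hp w1Wl) // scalerA scalerDl.
Qed.

End LieTheorem.

Section Spans.
Variable V : lmodType CC.
Implicit Types (s t : seq V) (v w : V).

Lemma in_span0 s : in_span s 0.
Proof. by exists (fun=> 0); rewrite big1 // => i _; rewrite scale0r. Qed.

Lemma in_spanZD s a v w : in_span s v -> in_span s w -> in_span s (a *: v + w).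
Proof.
move=> [c ->] [d ->]; exists (fun i => a * c i + d i).
rewrite scaler_sumr -big_split; apply: eq_bigr => i _.
by rewrite scalerDl scalerA.
Qed.

Lemma in_spanZ s a v : in_span s v -> in_span s (a *: v).
Proof. by move=> sv; rewrite -[_ *: v]addr0; apply: in_spanZD => //; apply: in_span0. Qed.

Lemma in_spanB s v w : in_span s v -> in_span s w -> in_span s (v - w).
Proof. by move=> sv sw; rewrite -scaleN1r addrC; apply: in_spanZD. Qed.

Lemma in_span_nth s (i : 'I_(size s)) : in_span s s`_i.
Proof.
exists (fun j => (j == i)%:R); rewrite (bigD1 i) //= eqxx scale1r big1 ?addr0 //.
by move=> j /negbTE ->; rewrite scale0r.
Qed.

Lemma in_span_mem s v : v \in s -> in_span s v.
Proof.
move=> vs; have := in_span_nth (Ordinal (etrans (index_mem v s) vs)).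
by rewrite /= nth_index.
Qed.

Lemma in_span_sum s m (a : 'I_m -> CC) (F : 'I_m -> V) :
  (forall i, in_span s (F i)) -> in_span s (\sum_(i < m) a i *: F i).
Proof.
elim: m a F => [|m IHm] a F sF; first by rewrite big_ord0; apply: in_span0.
by rewrite big_ord_recl; apply: in_spanZD => //; apply: IHm.
Qed.

Lemma in_span_linear s t (f : V -> V) : linear f ->
  (forall v, v \in s -> in_span t (f v)) -> forall w, in_span s w -> in_span t (f w).
Proof.
move=> f_lin st _ [c ->]; rewrite lin_sum //.
by apply: in_span_sum => i; apply/st/mem_nth.
Qed.

Lemma in_span_sub s t :
  (forall v, v \in s -> in_span t v) -> forall w, in_span s w -> in_span t w.
Proof. exact: (@in_span_linear _ _ id). Qed.

Lemma in_span_cons s v w : in_span s w -> in_span (v :: s) w.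
Proof. by apply: in_span_sub => x xs; apply: in_span_mem; rewrite inE xs orbT. Qed.

Definition free_seq s :=
  forall c : 'I_(size s) -> CC, \sum_i c i *: s`_i = 0 -> forall i, c i = 0.

Lemma free_seq_cons v s : free_seq s -> ~ in_span s v -> free_seq (v :: s).
Proof.
move=> free_s sv c; rewrite big_ord_recl /= => c_rel.
have c0 : c ord0 = 0.
  have [//|c0_neq0] := eqVneq (c ord0) 0; case: sv.
  exists (fun i => - (c ord0)^-1 * c (lift ord0 i)); apply: (scalerI c0_neq0).
  move/eqP: c_rel; rewrite addr_eq0 => /eqP ->; rewrite scaler_sumr -sumrN.
  by apply: eq_bigr => i _; rewrite scalerA mulrA mulrN mulfV // mulN1r scaleNr.
move: c_rel; rewrite c0 scale0r add0r => /free_s cs i.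
by case: (unliftP ord0 i) => [j ->|->] //; apply: cs.
Qed.

Lemma free_spanning_seq s :
  exists2 t, free_seq t & forall w, in_span s w <-> in_span t w.
Proof.
elim: s => [|v s [t free_t st]]; first by exists [::] => // c _ [].
have [tv | tNv] := classic (in_span t v).
  exists t => // w; split; last by move/st/in_span_cons.
  apply: in_span_sub => x; rewrite inE => /predU1P [-> // | xs].
  exact/st/in_span_mem.
exists (v :: t); first exact: free_seq_cons.
move=> w; split; apply: in_span_sub => x; rewrite inE => /predU1P [-> | xs];
  by [apply: in_span_mem; rewrite mem_head | apply/in_span_cons/st/in_span_mem].
Qed.

Definition lincomb s (c : 'rV[CC]_(size s)) : V := \sum_i c 0 i *: s`_i.
#[global] Arguments lincomb s c : clear implicits.

Lemma lincomb_linear s : linear (lincomb s).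
Proof.
move=> a c d; rewrite /lincomb scaler_sumr -big_split; apply: eq_bigr => i _.
by rewrite !mxE scalerDl scalerA.
Qed.

Lemma in_spanP s w : in_span s w <-> exists c, lincomb s c = w.
Proof.
split=> [[c ->] | [c <-]]; last by exists (c 0).
by exists (\row_i c i); apply: eq_bigr => i _; rewrite mxE.
Qed.

Lemma lincomb_inj s : free_seq s -> injective (lincomb s).
Proof.
move=> free_s c d cd; apply/rowP => i.
have : lincomb s (c - d) = 0 by rewrite (linB (lincomb_linear (s := s))) cd subrr.
by move/(free_s (fun j => (c - d) 0 j))/(_ i)/eqP; rewrite !mxE subr_eq0 => /eqP.
Qed.

Lemma lincomb_mulmx_inj s m (M N : 'M_(m, size s)) : free_seq s ->
  (forall c, lincomb s (c *m M) = lincomb s (c *m N)) -> M = N.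
Proof. by move=> free_s MN; apply/row_matrixP => i; rewrite !rowE; exact: lincomb_inj. Qed.

End Spans.

Section Modules.
Variables (g : vectType CC) (br : g -> g -> g) (V : lmodType CC) (act : g -> V -> V).
Hypothesis Hmod : is_lie_module br act.

Lemma act_linear x : linear (act x).
Proof. by case: Hmod => _ H _ a v w; apply: H. Qed.

Lemma act_linear_l v : linear (act^~ v).
Proof. by case: Hmod => H _ _ a x y; apply: H. Qed.

Lemma act_br x y v : act (br x y) v = act x (act y v) - act y (act x v).
Proof. by case: Hmod. Qed.

Lemma irreducible_generates v : irreducible_module act -> v != 0 -> generates act v.
Proof.
move=> [_ irrV] v_neq0 S subS Sv w.
by case: (irrV S subS) => // S0; move: v_neq0; rewrite (S0 v Sv) eqxx.
Qed.

Section WeightGenerator.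
Variables (p : {vspace g}) (phi : g -> CC) (v : V).
Hypothesis Hpi : lie_ideal br p.
Hypothesis v_weight : forall x, x \in p -> act x v = phi x *: v.

Let words n := iter n (fun l => l ++ [seq act x w | x <- vbasis fullv, w <- l]) [:: v].

Let words_succ n w : in_span (words n) w -> in_span (words n.+1) w.
Proof. by apply: in_span_sub => x xL; apply: in_span_mem; rewrite /= mem_cat xL. Qed.

Let words_mono m n w : (m <= n)%N -> in_span (words m) w -> in_span (words n) w.
Proof. by move=> /subnK <-; elim: (n - m)%N => // k IHk /IHk; apply: words_succ. Qed.

Let words_act n y w : in_span (words n) w -> in_span (words n.+1) (act y w).
Proof.
move=> Lw; rewrite (coord_vbasis (memvf y)) (lin_sum (act_linear_l _)).
apply: in_span_sum => i; apply: (in_span_linear (act_linear _)) Lw => x xL.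
apply/in_span_mem; rewrite /= mem_cat allpairs_f ?orbT //.
by apply: mem_nth; rewrite size_tuple.
Qed.

Let words_stable n x w : x \in p -> in_span (words n) w -> in_span (words n) (act x w).
Proof.
elim: n x w => [|n IHn] x w xp; apply: (in_span_linear (act_linear _)) => u.
  by rewrite inE => /eqP ->; rewrite v_weight //; apply/in_spanZ/in_span_mem/mem_head.
rewrite /= mem_cat => /orP [uL | /allpairsP [[b w'] [/= _ w'L ->]]].
  by apply: words_succ; apply: IHn => //; apply: in_span_mem.
have -> : act x (act b w') = act b (act x w') - act (br b x) w'.
  by rewrite act_br opprB addrC subrK.
apply: in_spanB; first by apply: words_act; apply: IHn => //; apply: in_span_mem.
by apply: words_succ; apply: IHn; [apply: Hpi | apply: in_span_mem].
Qed.

Lemma weight_generator_locally_finite : generates act v -> locally_finite act p.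
Proof.
move=> gen_v w; suff [n Lw] : exists n, in_span (words n) w.
  by exists (words n); split => // x u xp; apply: words_stable.
apply: (gen_v (fun u => exists n, in_span (words n) u)); last first.
  by exists 0%N; apply/in_span_mem/mem_head.
split; first by exists 0%N; apply: in_span0.
  move=> a u u' [m Lu] [m' Lu']; exists (maxn m m').
  by apply: in_spanZD; [apply: words_mono Lu | apply: words_mono Lu'];
    rewrite ?leq_maxl ?leq_maxr.
by move=> x u [m Lu]; exists m.+1; apply: words_act.
Qed.

End WeightGenerator.

Lemma stable_span_matrix (p : {vspace g}) s :
  (forall x w, x \in p -> in_span s w -> in_span s (act x w)) ->
  exists rho : g -> 'M_(size s),
    forall x, x \in p -> forall c, lincomb s (c *m rho x) = act x (lincomb s c).
Proof.
move=> s_stable.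
have rows x : exists M : 'M_(size s),
    (x \in p) ==> [forall i, lincomb s (row i M) == act x s`_i].
  have [xp | _] := boolP (x \in p); last by exists 0.
  have [u su] := fin_all_exists (fun i : 'I_(size s) =>
    proj1 (in_spanP _ _) (s_stable x _ xp (in_span_nth i))).
  by exists (\matrix_i u i); apply/forallP => i; rewrite rowK su.
exists (fun x => xchoose (rows x)) => x xp c.
have /implyP /(_ xp) /forallP rowsP := xchooseP (rows x).
rewrite mulmx_sum_row (lin_sum (lincomb_linear (s := s))) (lin_sum (act_linear x)).
by apply: eq_bigr => i _; rewrite (eqP (rowsP i)).
Qed.

Lemma stable_span_representation (p : {vspace g}) s :
  lie_ideal br p -> free_seq s ->
  (forall x w, x \in p -> in_span s w -> in_span s (act x w)) ->
  exists rho : g -> 'M_(size s),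
    [/\ forall x, x \in p -> forall c, lincomb s (c *m rho x) = act x (lincomb s c),
        forall a x y, x \in p -> y \in p -> rho (a *: x + y) = a *: rho x + rho y
      & forall x y, x \in p -> y \in p -> rho (br x y) = rho y *m rho x - rho x *m rho y].
Proof.
move=> Hpi free_s /stable_span_matrix [rho rhoP].
exists rho; split=> // [a x y | x y] xp yp.
  apply: lincomb_mulmx_inj free_s _ => c.
  rewrite rhoP ?memvD ?memvZ // mulmxDr -scalemxAr (lincomb_linear (s := s)).
  by rewrite !rhoP // act_linear_l.
apply: lincomb_mulmx_inj free_s _ => c.
by rewrite rhoP ?Hpi // mulmxBr !mulmxA (linB (lincomb_linear (s := s))) !rhoP // act_br.
Qed.

Lemma locally_finite_common_eigenvector (p : {vspace g}) :
  is_lie_bracket br -> lie_ideal br p -> lie_solvable br p -> locally_finite act p ->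
  (exists v : V, v != 0) ->
  exists2 v : V, v != 0 & forall x, x \in p -> exists a, act x v = a *: v.
Proof.
move=> Hbr Hpi Hps lf [v0 v0_neq0].
have [s [v0s s_stable]] := lf v0; have [t free_t st] := free_spanning_seq s.
have t_stable x w : x \in p -> in_span t w -> in_span t (act x w).
  by move=> xp /st /(s_stable _ _ xp) /st.
have [rho [rhoP rho_linear rho_br]] := stable_span_representation Hpi free_t t_stable.
have t_gt0 : (0 < size t)%N.
  have /st /in_spanP [c v0c] := v0s; rewrite lt0n; apply: contraNneq v0_neq0 => t0.
  by rewrite -v0c /lincomb big1 // => i; have := ltn_ord i; rewrite {2}t0.
have W0 : (1%:M : 'M[CC]_(size t)) != 0 by rewrite -mxrank_eq0 mxrank1 -lt0n.
have [c c_neq0 [_ c_eig]] := solvable_common_eigenvector Hbr rho_linear rho_br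
  (subvv p) (lie_ideal_subalgebra Hpi) Hps W0 (fun x _ => submx1 _).
exists (lincomb t c).
  apply: contraNneq c_neq0; rewrite -(lin0 (lincomb_linear (s := t))).
  by move/(lincomb_inj free_t) ->.
move=> x xp; have [a ca] := c_eig x xp.
by exists a; rewrite -rhoP // ca (linZ (lincomb_linear (s := t))).
Qed.

Lemma weight_vector_derived_act0 (p : {vspace g}) (phi : g -> CC) v :
  (forall x, x \in p -> act x v = phi x *: v) ->
  forall z, z \in derived br p -> act z v = 0.
Proof.
move=> v_weight z; rewrite /derived; set S := [seq br _ _ | _ <- _, _ <- _] => zS.
rewrite (coord_span (X := in_tuple S) zS) (lin_sum (act_linear_l v)) big1 // => i _.
have : S`_i \in S by apply: mem_nth.
case/allpairsP => -[x y] [/= /vbasis_mem xp /vbasis_mem yp ->].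
rewrite act_br !v_weight // !(linZ (act_linear _)) !v_weight // !scalerA.
by rewrite mulrC subrr scaler0.
Qed.

Lemma weight_vector_character (p : {vspace g}) v :
  lie_subalgebra br p -> v != 0 -> (forall x, x \in p -> exists a, act x v = a *: v) ->
  exists phi, lie_hom_to_C br p phi /\ forall x, x \in p -> act x v = phi x *: v.
Proof.
move=> subp v_neq0 v_eig.
have ex x : exists a, (x \in p) ==> (act x v == a *: v).
  have [/v_eig [a va] | _] := boolP (x \in p); last by exists 0.
  by exists a; rewrite va eqxx.
pose phi x := xchoose (ex x).
have v_weight x : x \in p -> act x v = phi x *: v.
  by move=> xp; have /implyP /(_ xp) /eqP := xchooseP (ex x).
exists phi; split=> //; split=> [a x y xp yp | z zD].
  apply: (scalerIv v_neq0); rewrite -v_weight ?memvD ?memvZ //.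
  by rewrite act_linear_l !v_weight // scalerDl scalerA.
apply: (scalerIv v_neq0); rewrite -v_weight ?(subvP (derived_sub subp)) // scale0r.
exact: weight_vector_derived_act0 v_weight z zD.
Qed.

End Modules.

Theorem theorem2p5 (g : vectType CC) (br : g -> g -> g)
  (Hbr : is_lie_bracket br)
  (Hnss : ~ lie_semisimple br)
  (p : {vspace g}) (Hpi : lie_ideal br p) (Hps : lie_solvable br p)
  (Hpnp : ~ lie_perfect br p)
  (V : lmodType CC) (act : g -> V -> V)
  (Hmod : is_lie_module br act) (Hirr : irreducible_module act) :
  locally_finite act p <-> quasi_whittaker br act p.
Proof.
split=> [lf | [phi [_ [v [v_weight gen_v]]]]]; last first.
  exact: (weight_generator_locally_finite Hmod Hpi v_weight gen_v).
have [v v_neq0 v_eig] := locally_finite_common_eigenvector Hmod Hbr Hpi Hps lf Hirr.1.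
have [phi [phi_hom v_weight]] :=
  weight_vector_character Hmod (lie_ideal_subalgebra Hpi) v_neq0 v_eig.
by exists phi; split=> //; exists v; split=> //; apply: irreducible_generates.
Qed.
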